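(* Let $x\in\mathrm{SUBT}(K_n)$ be such that $G_x$ is 3-edge-connected and cubic, and let $\mathcal{C}\subseteq E_x$ be any 2-factor of $G_x$. Define $y\in\mathbb{R}^{E_n}$ by $y_e=\frac12$ for $e\in\mathcal{C}$, $y_e=1$ for $e\in E_x\setminus\mathcal{C}$, and $y_e=0$ otherwise. Then $y\in\mathrm{SUBT}(K_n)$.
   Context: $K_n$ is the complete graph on $V_n=\{1,\dots,n\}$ with edge set $E_n$; $\delta(U)$ denotes the set of edges with exactly one endpoint in $U$. $\mathrm{SUBT}(K_n)=\{x\in[0,1]^{E_n}: x(\delta(\{i\}))=2\ \forall i,\ x(\delta(U))\ge2\ \forall\,\emptyset\ne U\subsetneq V_n\}$. $G_x=(V_n,E_x)$ with $E_x=\{e:x_e>0\}$. A 2-factor is a spanning subgraph in which every vertex has degree exactly 2. *)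

From HB Require Import structures.
From mathcomp Require Import all_boot all_order all_algebra.
Set Implicit Arguments. Unset Strict Implicit. Unset Printing Implicit Defensive.
Import Order.TTheory GRing.Theory Num.Theory.
Local Open Scope ring_scope.

(* Vertices of K_n: 'I_n (i.e. {0,...,n-1}, standing for {1,...,n}).
   Edges of K_n: two-element subsets of the vertex set. *)
Definition En (n : nat) : {set {set 'I_n}} := [set e : {set 'I_n} | #|e| == 2%N].

Definition delta (n : nat) (U : {set 'I_n}) : {set {set 'I_n}} :=
  [set e in En n | #|e :&: U| == 1%N].

Definition xsum (R : numDomainType) (n : nat) (x : {set 'I_n} -> R)
  (F : {set {set 'I_n}}) : R := \sum_(e in F) x e.

(* SUBT(K_n); a vector in R^{E_n} is a function on edges (values off En are
   irrelevant). *)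
Definition SUBT (R : numDomainType) (n : nat) (x : {set 'I_n} -> R) : Prop :=
  [/\ (forall e, e \in En n -> 0 <= x e <= 1),
      (forall i : 'I_n, xsum x (delta [set i]) = 2) &
      (forall U : {set 'I_n}, U != set0 -> U != setT -> 2 <= xsum x (delta U))].

Definition Ex (R : numDomainType) (n : nat) (x : {set 'I_n} -> R) : {set {set 'I_n}} :=
  [set e in En n | 0 < x e].

Definition adj (n : nat) (E : {set {set 'I_n}}) : rel 'I_n :=
  fun u v => [set u; v] \in E.

Definition connected_graph (n : nat) (E : {set {set 'I_n}}) : Prop :=
  forall u v : 'I_n, connect (adj E) u v.

Definition k_edge_connected (k n : nat) (E : {set {set 'I_n}}) : Prop :=
  forall F : {set {set 'I_n}}, F \subset E -> (#|F| < k)%N ->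
    connected_graph (E :\: F).

Definition degree (n : nat) (E : {set {set 'I_n}}) (i : 'I_n) : nat :=
  #|[set e in E | i \in e]|.

Definition cubic (n : nat) (E : {set {set 'I_n}}) : Prop :=
  forall i : 'I_n, degree E i = 3%N.

Definition two_factor (n : nat) (E C : {set {set 'I_n}}) : Prop :=
  C \subset E /\ forall i : 'I_n, degree C i = 2%N.

From HB Require Import structures.
From mathcomp Require Import all_boot all_order all_algebra.
From mathcomp Require Import lra zify.
Set Implicit Arguments. Unset Strict Implicit. Unset Printing Implicit Defensive.
Import Order.TTheory GRing.Theory Num.Theory.
Local Open Scope ring_scope.

(* For every edge set F we have
       y(F) = |F ∩ C| / 2 + |F ∩ (E \ C)|,
   so the three conditions defining SUBT(K_n) become counting statements:
   - the bounds 0 <= y_e <= 1 are immediate;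
   - at a vertex i, C has two edges at i and, G_x being cubic, E \ C has
     exactly one, whence y(δ({i})) = 1 + 1 = 2;
   - for a proper nonempty U, |δ(U) ∩ C| is even by double counting the
     C-degrees inside U (all even), and |δ(U) ∩ E| >= 3 by 3-edge-connectivity;
     an even a and any b with a + b >= 3 satisfy a/2 + b >= 2.
   The file first proves these counting facts for finite sets and for cuts
   of K_n (parity of cuts for any edge set with even degrees, cut size for
   any k-edge-connected graph), then derives the three conditions in the
   main theorem. *)

Definition half_on (R : numFieldType) (T : finType) (E C : {set T}) (e : T) : R :=
  if e \in C then 2^-1 else if e \in E then 1 else 0.

Lemma sum_indicator (T : finType) (F A : {set T}) :
  (\sum_(e in F) (e \in A) = #|F :&: A|)%N.
Proof.
rewrite (big_setID A) /= [X in (_ + X)%N]big1 ?addn0; last first.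
  by move=> e; rewrite inE => /andP[/negbTE -> _].
by rewrite -sum1_card; apply: eq_bigr => e; rewrite inE => /andP[_ ->].
Qed.

Lemma card_setI_split (T : finType) (F E C : {set T}) : C \subset E ->
  #|F :&: E| = (#|F :&: C| + #|F :&: (E :\: C)|)%N.
Proof.
move=> CE; rewrite -(cardsID C (F :&: E)) -setIA (setIidPr CE).
by rewrite setDE setDE setIA.
Qed.

Lemma half_on_bounds (R : realFieldType) (T : finType) (E C : {set T}) (e : T) :
  0 <= half_on R E C e <= 1.
Proof.
rewrite /half_on; case: (e \in C); last case: (e \in E).
- by apply/andP; split; lra.
- by rewrite ler01 lexx.
- by rewrite lexx ler01.
Qed.

Lemma half_on_sum (R : numFieldType) (T : finType) (E C F : {set T}) :
  C \subset E ->
  \sum_(e in F) half_on R E C e = #|F :&: C|%:R / 2 + #|F :&: (E :\: C)|%:R.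
Proof.
move=> CE.
rewrite (eq_bigr (fun e => 2^-1 * (e \in C)%:R + (e \in E :\: C)%:R)).
  by rewrite big_split /= -mulr_sumr -!natr_sum !sum_indicator mulrC.
move=> e _; rewrite /half_on inE; case: (e \in C) => /=.
  by rewrite mulr1 addr0.
by rewrite mulr0 add0r; case: (e \in E).
Qed.

Lemma half_even_add_ge2 (R : realFieldType) (a b : nat) :
  (2 %| a)%N -> (3 <= a + b)%N -> 2 <= a%:R / 2 + b%:R :> R.
Proof.
rewrite dvdn2 => a_even ab3.
have ab4 : (4 <= a + 2 * b)%N.
  by move: ab3; rewrite -(odd_double_half a) (negbTE a_even) add0n -muln2; lia.
have : 4%:R <= (a + 2 * b)%:R :> R by rewrite ler_nat.
rewrite natrD natrM; lra.
Qed.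

Lemma Ex_subset_En (R : numDomainType) (n : nat) (x : {set 'I_n} -> R) :
  Ex x \subset En n.
Proof. by apply/subsetP => e; rewrite inE => /andP[]. Qed.

Lemma pair_in_delta (n : nat) (U : {set 'I_n}) (a b : 'I_n) :
  a \in U -> b \notin U -> [set a; b] \in delta U.
Proof.
move=> aU bU; have ab : a != b by apply: contraNneq bU => <-.
rewrite !inE cards2 ab /=.
suff -> : [set a; b] :&: U = [set a] by rewrite cards1.
apply/setP => z; rewrite !inE; case: (eqVneq z a) => [->|_] //=.
by case: (eqVneq z b) => [->|]; rewrite ?(negbTE bU).
Qed.

Lemma card_delta1 (n : nat) (A : {set {set 'I_n}}) (i : 'I_n) :
  A \subset En n -> #|delta [set i] :&: A| = degree A i.
Proof.
move=> AEn; rewrite /degree; apply: eq_card => e; rewrite !inE.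
case eA: (e \in A); rewrite ?andbF // andbT.
have := subsetP AEn _ eA; rewrite inE => -> /=.
case ie: (i \in e); first by rewrite (setIidPr _) ?sub1set ?cards1.
have /eqP -> : e :&: [set i] == set0.
  by rewrite setI_eq0 disjoint_sym disjoints1 ie.
by rewrite cards0.
Qed.

Lemma degree_split (n : nat) (E C : {set {set 'I_n}}) (i : 'I_n) :
  C \subset E -> degree E i = (degree C i + degree (E :\: C) i)%N.
Proof.
move=> CE; rewrite /degree !setIdE.
by rewrite !(setIC _ [set e : {set 'I_n} | i \in e]) (card_setI_split _ CE).
Qed.

Lemma sum_degree (n : nat) (A : {set {set 'I_n}}) (U : {set 'I_n}) :
  (\sum_(i in U) degree A i = \sum_(e in A) #|e :&: U|)%N.
Proof.
transitivity (\sum_(i in U) \sum_(e in A) (i \in e))%N.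
  apply: eq_bigr => i _; rewrite /degree setIdE -sum_indicator.
  by apply: eq_bigr => e _; rewrite inE.
by rewrite exchange_big; apply: eq_bigr => e _; rewrite setIC -sum_indicator.
Qed.

(* An edge meets U in 0, 1 or 2 vertices, and meets it once iff it lies in
   the cut δ(U); so the incidences with U are the cut edges plus twice the
   edges inside U. *)
Lemma sum_meet_sizes (n : nat) (A : {set {set 'I_n}}) (U : {set 'I_n}) :
  A \subset En n ->
  (\sum_(e in A) #|e :&: U|
     = #|delta U :&: A| + 2 * #|A :&: [set e | #|e :&: U| == 2]|)%N.
Proof.
move=> AEn; rewrite setIC -!sum_indicator big_distrr -big_split /=.
apply: eq_bigr => e eA; rewrite !inE.
have := subsetP AEn _ eA; rewrite inE => /eqP e2; rewrite e2 eqxx /=.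
have : (#|e :&: U| <= 2)%N by rewrite -e2 subset_leq_card ?subsetIl.
by case: #|e :&: U| => [|[|[|]]].
Qed.

Lemma cut_even (n : nat) (A : {set {set 'I_n}}) (U : {set 'I_n}) :
  A \subset En n -> (forall i, 2 %| degree A i)%N -> (2 %| #|delta U :&: A|)%N.
Proof.
move=> AEn deg_even.
have : (2 %| \sum_(i in U) degree A i)%N by apply: dvdn_sum => i _.
by rewrite sum_degree sum_meet_sizes // dvdn_addl // dvdn_mulr.
Qed.

(* In a k-edge-connected graph every cut δ(U) of a proper nonempty U has at
   least k edges: removing the cut edges separates U from its complement. *)
Lemma cut_size_ge (k n : nat) (E : {set {set 'I_n}}) (U : {set 'I_n}) :
  k_edge_connected k E -> U != set0 -> U != setT -> (k <= #|delta U :&: E|)%N.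
Proof.
move=> kconn /set0Pn[u uU]; rewrite -properT => /properP[_ [v _ vU]].
rewrite leqNgt; apply/negP => small.
have closedU : closed (adj (E :\: (delta U :&: E))) (mem U).
  move=> a b; rewrite /adj in_setD in_setI => /andP[not_cut abE].
  case aU: (a \in U); case bU: (b \in U) => //; case/negP: not_cut.
    by rewrite abE pair_in_delta ?bU.
  by rewrite setUC in abE *; rewrite abE pair_in_delta ?aU.
have := closed_connect closedU (kconn _ (subsetIr _ _) small u v).
by rewrite uU (negbTE vU).
Qed.

Theorem mainTheorem7 (R : realFieldType) (n : nat) (x : {set 'I_n} -> R)
  (C : {set {set 'I_n}}) :
  SUBT x ->
  k_edge_connected 3 (Ex x) ->
  cubic (Ex x) ->
  two_factor (Ex x) C ->
  SUBT (fun e : {set 'I_n} =>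
          if e \in C then 2^-1 else if e \in Ex x then 1 else 0 : R).
Proof.
move=> _ conn3 cub [CE degC]; change (SUBT (half_on R (Ex x) C)).
have EEn := Ex_subset_En x.
have CEn : C \subset En n := subset_trans CE EEn.
have DEn : Ex x :\: C \subset En n := subset_trans (subsetDl _ _) EEn.
split.
- by move=> e _; apply: half_on_bounds.
- move=> i; rewrite /xsum half_on_sum // !card_delta1 // degC.
  have deg_rest : degree (Ex x :\: C) i = 1%N.
    by move: (degree_split i CE); rewrite cub degC; lia.
  rewrite deg_rest; lra.
- move=> U U0 UT; rewrite /xsum half_on_sum //; apply: half_even_add_ge2.
  + by apply: cut_even => // i; rewrite degC.
  + by rewrite -card_setI_split //; apply: cut_size_ge.
Qed.
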